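(* Consider the discrete-time, time-varying affine system $$x(t+1)=A(t)x(t)+B(t)u(t)+s+w(t),\qquad t=0,\dots,T-1,$$ with $x(t)\in\mathbb{R}^n$, $u(t)\in\mathbb{R}^m$, $s\in\mathbb{R}^n$, under an affine (causal, time-varying) state-feedback policy $\mathbf{u}=\mathbf{K}\mathbf{x}+\mathbf{u_s}$, where $\mathbf{K}\in\mathbb{R}^{m(T+1)\times n(T+1)}$ is block lower triangular (blocks of size $m\times n$) and $\mathbf{u_s}\in\mathbb{R}^{m(T+1)}$. Define $$\boldsymbol{\Phi_x}=(I-\mathcal{Z}\mathcal{A}-\mathcal{Z}\mathcal{B}\mathbf{K})^{-1},\quad \boldsymbol{\phi_x}=\boldsymbol{\Phi_x}\mathcal{Z}(\mathcal{B}\mathbf{u_s}+\mathbf{s}),$$ $$\boldsymbol{\Phi_u}=\mathbf{K}(I-\mathcal{Z}\mathcal{A}-\mathcal{Z}\mathcal{B}\mathbf{K})^{-1},\quad \boldsymbol{\phi_u}=\boldsymbol{\Phi_u}\mathcal{Z}(\mathcal{B}\mathbf{u_s}+\mathbf{s})+\mathbf{u_s},$$ where $I=I_{n(T+1)}$ (the inverse exists since $I-\mathcal{Z}\mathcal{A}-\mathcal{Z}\mathcal{B}\mathbf{K}$ is block lower triangular with identity diagonal blocks). Then the closed-loop trajectories satisfy $\mathbf{x}=\boldsymbol{\Phi_x}\mathbf{w}+\boldsymbol{\phi_x}$, $\mathbf{u}=\boldsymbol{\Phi_u}\mathbf{w}+\boldsymbol{\phi_u}$, and: 1. The quadruple $\{\boldsymbol{\Phi_x},\boldsymbol{\phi_x},\boldsymbol{\Phi_u},\boldsymbol{\phi_u}\}$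 satisfies the affine constraint $$\begin{bmatrix} I-\mathcal{Z}\mathcal{A} & -\mathcal{Z}\mathcal{B}\end{bmatrix}\begin{bmatrix}\boldsymbol{\Phi_x} & \boldsymbol{\phi_x}\\ \boldsymbol{\Phi_u} & \boldsymbol{\phi_u}\end{bmatrix}=\begin{bmatrix} I & \mathcal{Z}\mathbf{s}\end{bmatrix}.\qquad (\star)$$ 2. Conversely, for any $\boldsymbol{\Phi_x}\in\mathbb{R}^{n(T+1)\times n(T+1)}$, $\boldsymbol{\Phi_u}\in\mathbb{R}^{m(T+1)\times n(T+1)}$ block lower triangular, and any $\boldsymbol{\phi_x}\in\mathbb{R}^{n(T+1)}$, $\boldsymbol{\phi_u}\in\mathbb{R}^{m(T+1)}$ satisfying $(\star)$, the matrix $\boldsymbol{\Phi_x}$ is invertible, and the affine policy $\mathbf{u}=\mathbf{K}\mathbf{x}+\mathbf{u_s}$ with $\mathbf{K}=\boldsymbol{\Phi_u}\boldsymbol{\Phi_x}^{-1}$ and $\mathbf{u_s}=\boldsymbol{\phi_u}-\boldsymbol{\Phi_u}\boldsymbol{\Phi_x}^{-1}\boldsymbol{\phi_x}$ achieves exactly these maps, i.e. $(I-\mathcal{Z}\mathcal{A}-\mathcal{Z}\mathcal{B}\mathbf{K})^{-1}=\boldsymbol{\Phi_x}$, $\mathbf{K}(I-\mathcal{Z}\mathcal{A}-\mathcal{Z}\mathcal{B}\mathbf{K})^{-1}=\boldsymbol{\Phi_u}$, $\boldsymbol{\Phi_x}\mathcal{Z}(\mathcal{B}\mathbf{u_s}+\mathbf{s})=\boldsymbol{\phi_x}$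 and $\boldsymbol{\Phi_u}\mathcal{Z}(\mathcal{B}\mathbf{u_s}+\mathbf{s})+\mathbf{u_s}=\boldsymbol{\phi_u}$.
   Context: Signals over the horizon are stacked: $\mathbf{x}=[x_0^\top,\dots,x_T^\top]^\top\in\mathbb{R}^{n(T+1)}$, $\mathbf{u}=[u_0^\top,\dots,u_T^\top]^\top\in\mathbb{R}^{m(T+1)}$, $\mathbf{w}=[x(0)^\top,w(0)^\top,\dots,w(T-1)^\top]^\top\in\mathbb{R}^{n(T+1)}$ (initial state followed by disturbances), and $\mathbf{s}=[s^\top,\dots,s^\top,\mathbf{0}_n^\top]^\top\in\mathbb{R}^{n(T+1)}$ ($T$ copies of $s$ followed by a zero block). $\mathcal{A}=\mathrm{diag}(A(0),\dots,A(T-1),\mathbf{0}_{n\times n})$ and $\mathcal{B}=\mathrm{diag}(B(0),\dots,B(T-1),\mathbf{0}_{n\times m})$ are block-diagonal. $\mathcal{Z}\in\mathbb{R}^{n(T+1)\times n(T+1)}$ is the block-downshift operator: identity blocks $I_n$ on the first block subdiagonal and zeros elsewhere. With this notation the dynamics over the horizon read $\mathbf{x}=\mathcal{Z}\mathcal{A}\mathbf{x}+\mathcal{Z}\mathcal{B}\mathbf{u}+\mathcal{Z}\mathbf{s}+\mathbf{w}$. *)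

From HB Require Import structures.
From mathcomp Require Import all_boot all_order all_algebra.
Set Implicit Arguments. Unset Strict Implicit. Unset Printing Implicit Defensive.
Import Order.TTheory GRing.Theory Num.Theory.
Local Open Scope ring_scope.

(* Stacked signals over horizon 0..T: an index i : 'I_(p * T.+1) of a
   vector in R^{p(T+1)} lives in block (time) i %/ p at position i %% p. *)

Lemma blk_pos_lt (p k : nat) (i : 'I_(p * k)) : (i %% p < p)%N.
Proof.
case: p i => [|p] i; last by rewrite ltn_pmod.
by case: i => /= i; rewrite mul0n.
Qed.

Definition blk (p k : nat) (i : 'I_(p * k)) : nat := (i %/ p)%N.
Definition pos (p k : nat) (i : 'I_(p * k)) : 'I_p := Ordinal (blk_pos_lt i).

Section Stacked.
Variables (R : fieldType) (n m T : nat).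

Definition Zop : 'M[R]_(n * T.+1) :=
  \matrix_(i, j) ((blk i == (blk j).+1) && (pos i == pos j))%:R.

Definition calA (A : nat -> 'M[R]_n) : 'M[R]_(n * T.+1) :=
  \matrix_(i, j) (if (blk i == blk j) && (blk i < T)%N
                  then A (blk i) (pos i) (pos j) else 0).

Definition calB (B : nat -> 'M[R]_(n, m)) : 'M[R]_(n * T.+1, m * T.+1) :=
  \matrix_(i, j) (if (blk i == blk j) && (blk i < T)%N
                  then B (blk i) (pos i) (pos j) else 0).

Definition sbf (s : 'cV[R]_n) : 'cV[R]_(n * T.+1) :=
  \col_i (if (blk i < T)%N then s (pos i) 0 else 0).
End Stacked.

Definition blk_lower_tri (R : fieldType) (p q k : nat)
  (M : 'M[R]_(p * k, q * k)) : Prop :=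
  forall i j, (blk i < blk j)%N -> M i j = 0.

(* Causality is the engine: the shift Z is strictly block lower triangular
   and A, B, K, Phi_x, Phi_u are block lower triangular, so every matrix of
   the form 1 - N that occurs (the closed-loop matrix in part 1, Phi_x itself
   in part 2) has N strictly block lower triangular.  Such N is nilpotent,
   whence 1 - N is invertible with the block lower triangular inverse
   1 + N + ... + N^T.  Everything else is matrix algebra: the closed-loop
   matrix M satisfies M x = w + Z (B u_s + s), and in the converse the
   constraint (star) reads M Phi_x = 1 once K Phi_x = Phi_u. *)

From HB Require Import structures.
From mathcomp Require Import all_boot all_order all_algebra.
Import Order.TTheory GRing.Theory Num.Theory.
Set Implicit Arguments. Unset Strict Implicit. Unset Printing Implicit Defensive.
Local Open Scope ring_scope.

Definition blk_strict_lower_tri (R : fieldType) (p q k : nat)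
  (M : 'M[R]_(p * k, q * k)) : Prop :=
  forall i j, (blk i <= blk j)%N -> M i j = 0.

Lemma blk_lt (p k : nat) (i : 'I_(p * k)) : (blk i < k)%N.
Proof.
rewrite /blk; case: p i => [|p] [i /=]; first by rewrite mul0n.
by rewrite ltn_divLR // mulnC.
Qed.

Lemma invmx_mulmx1 (R : fieldType) (k : nat) (A B : 'M[R]_k) :
  A *m B = 1%:M -> invmx A = B.
Proof.
move=> AB; have [A_unit _] := mulmx1_unit AB.
by rewrite -[invmx A]mulmx1 -AB mulmxA mulVmx ?mul1mx.
Qed.

Section BlockTriangular.
Variables (R : fieldType) (k : nat).
Implicit Types p q r : nat.

Lemma blk_lower_tri0 p q : blk_lower_tri (0 : 'M[R]_(p * k, q * k)).
Proof. by move=> i j _; rewrite mxE. Qed.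

Lemma blk_lower_tri1 p : blk_lower_tri (1%:M : 'M[R]_(p * k)).
Proof. by move=> i j lt_ij; rewrite mxE; case: eqP => // eq_ij; rewrite eq_ij ltnn in lt_ij. Qed.

Lemma blk_lower_triD p q (X Y : 'M[R]_(p * k, q * k)) :
  blk_lower_tri X -> blk_lower_tri Y -> blk_lower_tri (X + Y).
Proof. by move=> hX hY i j lt_ij; rewrite mxE hX ?hY ?addr0. Qed.

Lemma blk_lower_tri_mulmx p q r (X : 'M[R]_(p * k, q * k)) (Y : 'M[R]_(q * k, r * k)) :
  blk_lower_tri X -> blk_lower_tri Y -> blk_lower_tri (X *m Y).
Proof.
move=> hX hY i j lt_ij; rewrite mxE big1 // => l _.
have [lt_il | le_li] := ltnP (blk i) (blk l); first by rewrite hX ?mul0r.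
by rewrite hY ?mulr0 // (leq_ltn_trans le_li).
Qed.

Lemma blk_strict_lower_triD p q (X Y : 'M[R]_(p * k, q * k)) :
  blk_strict_lower_tri X -> blk_strict_lower_tri Y -> blk_strict_lower_tri (X + Y).
Proof. by move=> hX hY i j le_ij; rewrite mxE hX ?hY ?addr0. Qed.

Lemma blk_strict_lower_triN p q (X : 'M[R]_(p * k, q * k)) :
  blk_strict_lower_tri X -> blk_strict_lower_tri (- X).
Proof. by move=> hX i j le_ij; rewrite mxE hX ?oppr0. Qed.

Lemma blk_strict_lower_tri_mulmxl p q r (X : 'M[R]_(p * k, q * k)) (Y : 'M[R]_(q * k, r * k)) :
  blk_strict_lower_tri X -> blk_lower_tri Y -> blk_strict_lower_tri (X *m Y).
Proof.
move=> hX hY i j le_ij; rewrite mxE big1 // => l _.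
have [le_il | lt_li] := leqP (blk i) (blk l); first by rewrite hX ?mul0r.
by rewrite hY ?mulr0 // (leq_trans lt_li).
Qed.

(* Each factor of a strictly block lower triangular matrix moves an entry
   at least one block down. *)
Lemma blk_strict_lower_tri_exprE p (N : 'M[R]_(p * k)) e i j :
  blk_strict_lower_tri N -> (blk i < blk j + e)%N -> (N ^+ e) i j = 0.
Proof.
move=> hN; elim: e i j => [|e IHe] i j.
  by rewrite addn0 expr0 -idmxE; exact: blk_lower_tri1.
rewrite addnS exprS -mulmxE mxE => lt_ij; rewrite big1 // => l _.
have [le_il | lt_li] := leqP (blk i) (blk l); first by rewrite hN ?mul0r.
by rewrite IHe ?mulr0 // (leq_trans lt_li).
Qed.

Lemma blk_strict_lower_tri_nilpotent p (N : 'M[R]_(p * k)) :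
  blk_strict_lower_tri N -> N ^+ k = 0.
Proof.
move=> hN; apply/matrixP => i j; rewrite mxE blk_strict_lower_tri_exprE //.
exact: leq_trans (blk_lt i) (leq_addl _ _).
Qed.

Lemma blk_strict_lower_tri_subr1 p (N : 'M[R]_(p * k)) :
  blk_strict_lower_tri N ->
  1%:M - N \in unitmx /\ blk_lower_tri (invmx (1%:M - N)).
Proof.
move=> hN.
have geom : (1%:M - N) *m (\sum_(e < k) N ^+ e) = 1%:M.
  apply/eqP; rewrite mulmxE idmxE -[_ - N]opprB mulNr -subrX1.
  by rewrite blk_strict_lower_tri_nilpotent // sub0r opprK.
split; first by case: (mulmx1_unit geom).
rewrite (invmx_mulmx1 geom).
apply: (big_ind (@blk_lower_tri R p p k)) => [|X Y|e _].
- exact: blk_lower_tri0.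
- exact: blk_lower_triD.
- by move=> i j lt_ij; rewrite blk_strict_lower_tri_exprE // ltn_addr.
Qed.
End BlockTriangular.

Section AffineClosedLoop.
Variables (R : fieldType) (n m k : nat).
Variables (Z cA : 'M[R]_(n * k)) (cB : 'M[R]_(n * k, m * k)) (s : 'cV[R]_(n * k)).
Hypotheses (Z_strict : blk_strict_lower_tri Z)
  (cA_lower : blk_lower_tri cA) (cB_lower : blk_lower_tri cB).

Local Notation closed_loop K := (1 - Z *m cA - Z *m cB *m K).

Lemma achievability_constraintE (Px : 'M[R]_(n * k)) (Pu : 'M[R]_(m * k, n * k)) px pu :
  row_mx (1 - Z *m cA) (- (Z *m cB)) *m col_mx (row_mx Px px) (row_mx Pu pu)
    = row_mx 1%:M (Z *m s) <->
  (1 - Z *m cA) *m Px - Z *m cB *m Pu = 1%:M /\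
  (1 - Z *m cA) *m px - Z *m cB *m pu = Z *m s.
Proof.
rewrite mul_row_col !mul_mx_row add_row_mx !mulNmx.
by split=> [/eq_row_mx | [-> ->]].
Qed.

Lemma feedback_strict_lower_tri (Px : 'M[R]_(n * k)) (Pu : 'M[R]_(m * k, n * k)) :
  blk_lower_tri Px -> blk_lower_tri Pu ->
  blk_strict_lower_tri (Z *m cA *m Px + Z *m cB *m Pu).
Proof.
move=> Px_lower Pu_lower.
by apply: blk_strict_lower_triD; apply: blk_strict_lower_tri_mulmxl => //;
  apply: blk_strict_lower_tri_mulmxl.
Qed.

Lemma closed_loop_unit (K : 'M[R]_(m * k, n * k)) :
  blk_lower_tri K -> closed_loop K \in unitmx.
Proof.
move=> K_lower; rewrite -addrA -opprD -[Z *m cA]mulmx1.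
have N_strict := feedback_strict_lower_tri (@blk_lower_tri1 R k n) K_lower.
by case: (blk_strict_lower_tri_subr1 N_strict).
Qed.

Lemma closed_loop_mulmx (K : 'M[R]_(m * k, n * k)) us w x u :
  x = Z *m cA *m x + Z *m cB *m u + Z *m s + w -> u = K *m x + us ->
  closed_loop K *m x = w + Z *m (cB *m us + s).
Proof.
move=> hx hu; rewrite hu mulmxDr !mulmxA in hx.
rewrite !mulmxBl mul1mx -addrA -opprD; apply/eqP; rewrite subr_eq {1}hx.
by rewrite mulmxDr mulmxA; apply/eqP; rewrite (AC (1*2*1*1) (5*(3*4)*(1*2)))%AC.
Qed.

Lemma affine_policy_closed_loop_maps (K : 'M[R]_(m * k, n * k)) (us : 'cV[R]_(m * k)) :
  blk_lower_tri K ->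
  let M := closed_loop K in
  let Phix := invmx M in
  let phix := Phix *m Z *m (cB *m us + s) in
  let Phiu := K *m invmx M in
  let phiu := Phiu *m Z *m (cB *m us + s) + us in
  [/\ M \in unitmx,
      (forall (w x : 'cV[R]_(n * k)) (u : 'cV[R]_(m * k)),
         x = Z *m cA *m x + Z *m cB *m u + Z *m s + w ->
         u = K *m x + us ->
         x = Phix *m w + phix /\ u = Phiu *m w + phiu) &
      row_mx (1 - Z *m cA) (- (Z *m cB)) *m
        col_mx (row_mx Phix phix) (row_mx Phiu phiu)
      = row_mx (1%:M) (Z *m s)].
Proof.
move=> K_lower M Phix phix Phiu phiu; have M_unit := closed_loop_unit K_lower.
have constraint y : (1 - Z *m cA) *m (Phix *m y) - Z *m cB *m (Phiu *m y) = y.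
  by rewrite !mulmxA -!mulmxBl mulmxV ?mul1mx.
split=> //.
- move=> w x u hx hu.
  have x_eq : x = Phix *m w + phix.
    by rewrite -(mulKmx M_unit x) (closed_loop_mulmx hx hu) (mulmxDr (invmx M)) mulmxA.
  by split=> //; rewrite hu x_eq mulmxDr !mulmxA addrA.
- apply/achievability_constraintE; split.
    by have := constraint _ 1%:M; rewrite !mulmx1.
  rewrite /phiu /phix -!(mulmxA _ Z) (mulmxDr (Z *m cB)) opprD addrA constraint.
  by rewrite mulmxDr mulmxA addrC addKr.
Qed.

Lemma achievable_response_unit (Px : 'M[R]_(n * k)) (Pu : 'M[R]_(m * k, n * k)) :
  blk_lower_tri Px -> blk_lower_tri Pu ->
  (1 - Z *m cA) *m Px - Z *m cB *m Pu = 1%:M ->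
  Px \in unitmx /\ blk_lower_tri (invmx Px).
Proof.
move=> Px_lower Pu_lower constraint.
have -> : Px = 1%:M - - (Z *m cA *m Px + Z *m cB *m Pu).
  by rewrite opprK -constraint mulmxBl mul1mx -[Px - _ - _]addrA -opprD subrK.
exact/blk_strict_lower_tri_subr1/blk_strict_lower_triN/feedback_strict_lower_tri.
Qed.

Lemma closed_loop_maps_affine_policy (Px : 'M[R]_(n * k)) (Pu : 'M[R]_(m * k, n * k)) px pu :
  blk_lower_tri Px -> blk_lower_tri Pu ->
  row_mx (1 - Z *m cA) (- (Z *m cB)) *m
    col_mx (row_mx Px px) (row_mx Pu pu) = row_mx 1%:M (Z *m s) ->
  Px \in unitmx /\
  let K := Pu *m invmx Px in
  let us := pu - Pu *m invmx Px *m px in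
  let M := closed_loop K in
  [/\ blk_lower_tri K,
      invmx M = Px,
      K *m invmx M = Pu,
      Px *m Z *m (cB *m us + s) = px &
      Pu *m Z *m (cB *m us + s) + us = pu].
Proof.
move=> Px_lower Pu_lower /achievability_constraintE[constraint_Px constraint_px].
have [Px_unit invPx_lower] := achievable_response_unit Px_lower Pu_lower constraint_Px.
split=> // K us M.
have KPx : K *m Px = Pu by rewrite mulmxKV.
have MPx : M *m Px = 1%:M.
  by rewrite -constraint_Px !mulmxBl -(mulmxA _ K) KPx.
have invM : invmx M = Px := invmx_mulmx1 MPx.
have Mpx : M *m px = Z *m cB *m us + Z *m s.
  rewrite -constraint_px !mulmxBl mulmxBr -(mulmxA _ K).
  by rewrite [RHS]addrC [RHS]addrA subrK.
have px_eq : Px *m Z *m (cB *m us + s) = px.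
  by rewrite -mulmxA mulmxDr mulmxA -Mpx mulmxA (mulmx1C MPx) mul1mx.
split=> //.
- exact: blk_lower_tri_mulmx invPx_lower.
- by rewrite invM KPx.
- have -> : Pu *m Z *m (cB *m us + s) = K *m px by rewrite -px_eq -KPx !mulmxA.
  by rewrite addrC subrK.
Qed.
End AffineClosedLoop.

Lemma Zop_strict_lower_tri (R : fieldType) (n T : nat) :
  blk_strict_lower_tri (Zop R n T).
Proof. by move=> i j le_ij; rewrite mxE; case: eqP => //= eq_ij; rewrite eq_ij ltnn in le_ij. Qed.

Lemma calA_lower_tri (R : fieldType) (n T : nat) (A : nat -> 'M[R]_n) :
  blk_lower_tri (calA T A).
Proof. by move=> i j lt_ij; rewrite mxE; case: eqP => //= eq_ij; rewrite eq_ij ltnn in lt_ij. Qed.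

Lemma calB_lower_tri (R : fieldType) (n m T : nat) (B : nat -> 'M[R]_(n, m)) :
  blk_lower_tri (calB T B).
Proof. by move=> i j lt_ij; rewrite mxE; case: eqP => //= eq_ij; rewrite eq_ij ltnn in lt_ij. Qed.

Theorem theorem1 (R : realFieldType) (n m T : nat)
    (A : nat -> 'M[R]_n) (B : nat -> 'M[R]_(n, m)) (s : 'cV[R]_n) :
  let Z := Zop R n T in
  let cA := calA T A in
  let cB := calB T B in
  let sb := sbf T s in
  (* Part 1 : from an affine causal policy to the closed-loop maps *)
  (forall (K : 'M[R]_(m * T.+1, n * T.+1)) (us : 'cV[R]_(m * T.+1)),
    blk_lower_tri K ->
    let M := 1 - Z *m cA - Z *m cB *m K in
    let Phix := invmx M in
    let phix := Phix *m Z *m (cB *m us + sb) in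
    let Phiu := K *m invmx M in
    let phiu := Phiu *m Z *m (cB *m us + sb) + us in
    [/\ M \in unitmx,
        (forall (w x : 'cV[R]_(n * T.+1)) (u : 'cV[R]_(m * T.+1)),
           x = Z *m cA *m x + Z *m cB *m u + Z *m sb + w ->
           u = K *m x + us ->
           x = Phix *m w + phix /\ u = Phiu *m w + phiu) &
        row_mx (1 - Z *m cA) (- (Z *m cB)) *m
          col_mx (row_mx Phix phix) (row_mx Phiu phiu)
        = row_mx (1%:M) (Z *m sb)]) /\
  (* Part 2 : converse *)
  (forall (Phix : 'M[R]_(n * T.+1)) (Phiu : 'M[R]_(m * T.+1, n * T.+1))
          (phix : 'cV[R]_(n * T.+1)) (phiu : 'cV[R]_(m * T.+1)),
    blk_lower_tri Phix -> blk_lower_tri Phiu ->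
    row_mx (1 - Z *m cA) (- (Z *m cB)) *m
      col_mx (row_mx Phix phix) (row_mx Phiu phiu)
      = row_mx (1%:M) (Z *m sb) ->
    Phix \in unitmx /\
    let K := Phiu *m invmx Phix in
    let us := phiu - Phiu *m invmx Phix *m phix in
    let M := 1 - Z *m cA - Z *m cB *m K in
    [/\ blk_lower_tri K,
        invmx M = Phix,
        K *m invmx M = Phiu,
        Phix *m Z *m (cB *m us + sb) = phix &
        Phiu *m Z *m (cB *m us + sb) + us = phiu]).
Proof.
move=> Z cA cB sb.
have Z_strict : blk_strict_lower_tri Z by exact: Zop_strict_lower_tri.
have cA_lower : blk_lower_tri cA by exact: calA_lower_tri.
have cB_lower : blk_lower_tri cB by exact: calB_lower_tri.
split=> [K us | Phix Phiu phix phiu].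
- exact: affine_policy_closed_loop_maps.
- exact: closed_loop_maps_affine_policy.
Qed.
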